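(* Fix $n \ge 2$. If $x_1, x_2, \dots, x_n$ is a sequence of positive real numbers with mean $\mu = \frac1n\sum_{i=1}^n x_i$ and variance $\sigma^2 = \frac1n\sum_{i=1}^n (x_i-\mu)^2$ (with $\sigma\ge 0$), then $$\mu - (x_1 x_2 \cdots x_n)^{1/n} \le \sqrt{n-1}\,\sigma.$$ *)

From Stdlib Require Import Reals.
Open Scope R_scope.

(* sum_{i=0}^{n-1} f i  and  prod_{i=0}^{n-1} f i  (0-based indices) *)
Fixpoint sumR (n : nat) (f : nat -> R) : R :=
  match n with O => 0 | S m => sumR m f + f m end.
Fixpoint prodR (n : nat) (f : nat -> R) : R :=
  match n with O => 1 | S m => prodR m f * f m end.

Definition mean (n : nat) (x : nat -> R) : R := sumR n x / INR n.
Definition variance (n : nat) (x : nat -> R) : R :=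
  sumR n (fun i => (x i - mean n x) ^ 2) / INR n.
Definition geomean (n : nat) (x : nat -> R) : R :=
  Rpower (prodR n x) (/ INR n).

(* The geometric mean of positive numbers is at least their minimum [m], so it
   suffices to bound [mean - m].  This is Samuelson's inequality: no sample lies
   further than [sqrt (n - 1) * sigma] from the mean.  To prove it for the sample
   [x i], shift all deviations [x j - mean] by a constant [c]: as the deviations
   sum to zero, the sum of the shifted squares is [n sigma^2 + n c^2], and it
   dominates the single term [(x i - mean + c)^2]; the choice
   [c = (x i - mean) / (n - 1)] gives the bound. *)

From Stdlib Require Import Reals Lra Lia Psatz.
Open Scope R_scope.

Lemma sumR_sub_const n (f : nat -> R) c :
  sumR n (fun j => f j - c) = sumR n f - INR n * c.
Proof. induction n as [|n IH]; cbn [sumR]; [simpl; ring|rewrite IH, S_INR; ring]. Qed.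

Lemma sumR_sqr_shift n (f : nat -> R) c :
  sumR n (fun j => (f j + c) ^ 2)
  = sumR n (fun j => f j ^ 2) + 2 * c * sumR n f + INR n * c ^ 2.
Proof. induction n as [|n IH]; cbn [sumR]; [simpl; ring|rewrite IH, S_INR; ring]. Qed.

Lemma sumR_nonneg n (f : nat -> R) :
  (forall j, (j < n)%nat -> 0 <= f j) -> 0 <= sumR n f.
Proof.
  induction n as [|n IH]; intro Hf; cbn [sumR]; [lra|].
  pose proof (IH (fun j Hj => Hf j ltac:(lia))). pose proof (Hf n ltac:(lia)). lra.
Qed.

Lemma sumR_term_le n (f : nat -> R) i :
  (forall j, (j < n)%nat -> 0 <= f j) -> (i < n)%nat -> f i <= sumR n f.
Proof.
  induction n as [|n IH]; intros Hf Hi; cbn [sumR]; [lia|].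
  destruct (Nat.eq_dec i n) as [->|Hin].
  - pose proof (sumR_nonneg n f (fun j Hj => Hf j ltac:(lia))). lra.
  - pose proof (IH (fun j Hj => Hf j ltac:(lia)) ltac:(lia)). pose proof (Hf n ltac:(lia)). lra.
Qed.

Lemma prodR_ge_pow n (x : nat -> R) m :
  0 < m -> (forall j, (j < n)%nat -> m <= x j) -> m ^ n <= prodR n x.
Proof.
  induction n as [|n IH]; intros Hm Hx; simpl; [lra|].
  pose proof (IH Hm (fun j Hj => Hx j ltac:(lia))). pose proof (Hx n ltac:(lia)).
  pose proof (pow_lt m n Hm).
  rewrite Rmult_comm. apply Rmult_le_compat; lra.
Qed.

Lemma exists_argmin n (x : nat -> R) :
  (0 < n)%nat -> exists i, (i < n)%nat /\ forall j, (j < n)%nat -> x i <= x j.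
Proof.
  induction n as [|n IH]; intro Hn; [lia|].
  destruct (Nat.eq_dec n 0) as [->|Hn0].
  { exists 0%nat. split; [lia|]. intros j Hj. replace j with 0%nat by lia. lra. }
  destruct (IH ltac:(lia)) as [i [Hi Hmin]].
  destruct (Rle_dec (x i) (x n)).
  - exists i. split; [lia|]. intros j Hj.
    destruct (Nat.eq_dec j n) as [->|]; [lra|apply Hmin; lia].
  - exists n. split; [lia|]. intros j Hj.
    destruct (Nat.eq_dec j n) as [->|]; [lra|].
    pose proof (Hmin j ltac:(lia)). lra.
Qed.

Lemma INR_ge_2 n : (2 <= n)%nat -> 2 <= INR n.
Proof. intro Hn. apply (le_INR 2 n) in Hn. simpl in Hn. lra. Qed.

Lemma sumR_deviation_mean n (x : nat -> R) :
  (0 < n)%nat -> sumR n (fun j => x j - mean n x) = 0.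
Proof.
  intro Hn. rewrite sumR_sub_const. unfold mean.
  field. apply not_0_INR. lia.
Qed.

Lemma geomean_ge_lower_bound n (x : nat -> R) m :
  (0 < n)%nat -> 0 < m -> (forall j, (j < n)%nat -> m <= x j) -> m <= geomean n x.
Proof.
  intros Hn Hm Hx. unfold geomean.
  assert (HN : 0 < INR n) by (apply lt_0_INR; lia).
  assert (Hpow : Rpower m (INR n) <= prodR n x)
    by (rewrite Rpower_pow by exact Hm; exact (prodR_ge_pow n x m Hm Hx)).
  replace m with (Rpower (Rpower m (INR n)) (/ INR n)) at 1
    by (rewrite Rpower_mult, Rinv_r, Rpower_1 by lra; reflexivity).
  apply Rle_Rpower_l; [left; apply Rinv_0_lt_compat, HN|].
  split; [apply exp_pos|exact Hpow].
Qed.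

Lemma samuelson_inequality n (x : nat -> R) i :
  (2 <= n)%nat -> (i < n)%nat ->
  (x i - mean n x) ^ 2 <= (INR n - 1) * variance n x.
Proof.
  intros Hn Hi. unfold variance.
  pose proof (INR_ge_2 n Hn) as HN.
  set (N := INR n) in *. set (mu := mean n x).
  set (SS := sumR n (fun j => (x j - mu) ^ 2)).
  set (d := x i - mu). set (c := d / (N - 1)).
  assert (Hshift : (d + c) ^ 2 <= SS + N * c ^ 2).
  { pose proof (sumR_sqr_shift n (fun j => x j - mu) c) as E.
    rewrite sumR_deviation_mean in E by lia.
    rewrite Rmult_0_r, Rplus_0_r in E. fold N SS in E. rewrite <- E.
    apply (sumR_term_le n (fun j => (x j - mu + c) ^ 2)); [intros; apply pow2_ge_0|lia]. }
  assert (Hdc : d + c = N * c) by (unfold c; field; lra).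
  assert (Hd : d = (N - 1) * c) by (unfold c; field; lra).
  rewrite Hdc in Hshift. rewrite Hd.
  assert (Hc : N * (N - 1) * c ^ 2 <= SS) by nra.
  apply Rmult_le_reg_l with N; [lra|].
  replace (N * ((N - 1) * (SS / N))) with ((N - 1) * SS) by (field; lra).
  nra.
Qed.

Lemma le_sqrt_of_sqr_le a b : a ^ 2 <= b -> a <= sqrt b.
Proof.
  intro Hab. apply Rle_trans with (Rabs a); [apply Rle_abs|].
  rewrite <- sqrt_Rsqr_abs. apply sqrt_le_1_alt. unfold Rsqr. lra.
Qed.

Theorem corollary1 (n : nat) (x : nat -> R) :
  (2 <= n)%nat ->
  (forall i, (i < n)%nat -> 0 < x i) ->
  mean n x - geomean n x <= sqrt (INR n - 1) * sqrt (variance n x).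
Proof.
  intros Hn Hpos.
  destruct (exists_argmin n x ltac:(lia)) as [i [Hi Hmin]].
  pose proof (geomean_ge_lower_bound n x (x i) ltac:(lia) (Hpos i Hi) Hmin) as Hgeo.
  pose proof (samuelson_inequality n x i Hn Hi) as Hsam.
  pose proof (INR_ge_2 n Hn).
  rewrite <- sqrt_mult_alt by lra.
  apply Rle_trans with (mean n x - x i); [lra|].
  apply le_sqrt_of_sqr_le.
  replace ((mean n x - x i) ^ 2) with ((x i - mean n x) ^ 2) by ring.
  exact Hsam.
Qed.
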